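(* Let $\alpha \ge 1$, $\gamma \ge 1$, $A>0$ be constants. Let $n,\rho:[0,T]\times\mathbb{R}^3\to\mathbb{R}$, $u,H:[0,T]\times\mathbb{R}^3\to\mathbb{R}^3$ be $C^1$ functions with $n>0$, $\rho\ge 0$ and $\operatorname{div} H = 0$. Set $R=\rho+n$, $S=\rho/n$, $P=\rho^\alpha + A n^\gamma$, $q = P+\tfrac12|H|^2$, and $\frac{d}{dt}=\partial_t + (u\cdot\nabla)$. Regard $P$ as the function $$P(R,S)=\Big(\frac{RS}{S+1}\Big)^\alpha + A\Big(\frac{R}{S+1}\Big)^\gamma,$$ and let $$P_R=\frac{\partial P(R,S)}{\partial R}=\frac{\alpha}{R}\Big(\frac{RS}{S+1}\Big)^\alpha+\frac{\gamma A}{R}\Big(\frac{R}{S+1}\Big)^\gamma>0.$$ Then $(n,\rho,u,H)$ satisfies the two-fluid MHD system $$\partial_t n+\operatorname{div}(nu)=0,\quad \partial_t\rho+\operatorname{div}(\rho u)=0,\quad \partial_t((\rho+n)u)+\operatorname{div}((\rho+n)u\otimes u-H\otimes H)+\nabla q=0,\quad \partial_t H-\nabla\times(u\times H)=0$$ if and only if $U=(P,u,H,S)$ satisfies $$\frac{1}{RP_R}\frac{dP}{dt}+\operatorname{div}u=0,\quad R\frac{du}{dt}-(H\cdot\nabla)H+\nabla q=0,\quad \frac{dH}{dt}-(H\cdot\nabla)u+H\operatorname{div}u=0,\quad \frac{dS}{dt}=0 .$$ Moreover, the latter system can be written as $A_0(U)\partial_t U+\sum_{j=1}^3 A_j(U)\partial_j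 U=0$ with $A_0=\operatorname{diag}(1/(RP_R),R,R,R,1,1,1,1)$ and symmetric $8\times 8$ matrices $A_j(U)$, $j=1,2,3$; in particular it is a symmetric hyperbolic system ($A_0>0$) whenever $n>0$ and $\rho\ge0$.
   Context: This concerns a model of ideal compressible isentropic two-fluid magnetohydrodynamics: $n$ and $\rho$ are the densities of the two fluids, $u$ the common velocity, $H$ the magnetic field, $P$ the pressure, $q$ the total pressure. The quantity $S=\rho/n$ is an ''entropy-like'' function and $R=\rho+n$ the total density; note $n=R/(S+1)$, $\rho=RS/(S+1)$. *)

From HB Require Import structures.
From mathcomp Require Import all_boot all_order all_algebra.
From mathcomp Require Import all_classical all_reals all_analysis.
Set Implicit Arguments. Unset Strict Implicit. Unset Printing Implicit Defensive.
Import Order.TTheory GRing.Theory Num.Theory.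
Import numFieldNormedType.Exports.
Local Open Scope ring_scope.

Definition sfield (R : realType) := R -> 'rV[R]_3 -> R.
Definition vfield (R : realType) := 'I_3 -> sfield R.

Definition dt (R : realType) (f : sfield R) (t : R) (x : 'rV[R]_3) : R :=
  derive1 (fun s => f s x) t.
(* Space partial derivative  d_j f (t,x), j = 0,1,2 (= x_1,x_2,x_3). *)
Definition dx (R : realType) (j : 'I_3) (f : sfield R) (t : R) (x : 'rV[R]_3) : R :=
  derive (f t) x (delta_mx 0 j).

Definition inslab (R : realType) (T t : R) := 0 < t < T.

Definition C1on (R : realType) (T : R) (f : sfield R) : Prop :=
  forall t x, inslab T t ->
    derivable (fun s => f s x) t 1 /\
    (forall j : 'I_3, derivable (f t) x (delta_mx 0 j)) /\
    {for (t, x), continuous (fun p : R * 'rV[R]_3 => dt f p.1 p.2)} /\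
    (forall j : 'I_3,
       {for (t, x), continuous (fun p : R * 'rV[R]_3 => dx j f p.1 p.2)}).

Definition div (R : realType) (w : vfield R) : sfield R :=
  fun t x => \sum_(j < 3) dx j (w j) t x.
Definition matder (R : realType) (u : vfield R) (f : sfield R) : sfield R :=
  fun t x => dt f t x + \sum_(j < 3) u j t x * dx j f t x.
Definition crossf (R : realType) (a b : vfield R) : vfield R :=
  fun i t x => a (ordS i) t x * b (ordS (ordS i)) t x
             - a (ordS (ordS i)) t x * b (ordS i) t x.
Definition curl (R : realType) (w : vfield R) : vfield R :=
  fun i t x => dx (ordS i) (w (ordS (ordS i))) t x
             - dx (ordS (ordS i)) (w (ordS i)) t x.

Definition Pfun (R : realType) (alpha gamma A : R) (r s : R) : R :=
  (r * s / (s + 1)) `^ alpha + A * (r / (s + 1)) `^ gamma.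
Definition PRfun (R : realType) (alpha gamma A : R) (r s : R) : R :=
  alpha / r * (r * s / (s + 1)) `^ alpha + gamma * A / r * (r / (s + 1)) `^ gamma.

Section Fields.
Variables (R : realType) (alpha gamma A : R) (n rho : sfield R) (u H : vfield R).

Definition Rf : sfield R := fun t x => rho t x + n t x.
Definition Sf : sfield R := fun t x => rho t x / n t x.
Definition Pf : sfield R := fun t x => rho t x `^ alpha + A * n t x `^ gamma.
Definition qf : sfield R :=
  fun t x => Pf t x + 2^-1 * \sum_(i < 3) H i t x ^+ 2.
Definition PRf : sfield R := fun t x => PRfun alpha gamma A (Rf t x) (Sf t x).

Definition sys1_at (t : R) (x : 'rV[R]_3) : Prop :=
  [/\ dt n t x + div (fun j t x => n t x * u j t x) t x = 0,
      dt rho t x + div (fun j t x => rho t x * u j t x) t x = 0,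
      (forall i : 'I_3,
        dt (fun t x => Rf t x * u i t x) t x
        + \sum_(j < 3) dx j (fun t x => Rf t x * u i t x * u j t x
                                     - H i t x * H j t x) t x
        + dx i qf t x = 0) &
      (forall i : 'I_3, dt (H i) t x - curl (crossf u H) i t x = 0)].

Definition eqP_lhs : sfield R :=
  fun t x => 1 / (Rf t x * PRf t x) * matder u Pf t x + div u t x.
Definition equ_lhs (i : 'I_3) : sfield R :=
  fun t x => Rf t x * matder u (u i) t x
             - \sum_(j < 3) H j t x * dx j (H i) t x + dx i qf t x.
Definition eqH_lhs (i : 'I_3) : sfield R :=
  fun t x => matder u (H i) t x - \sum_(j < 3) H j t x * dx j (u i) t x
             + H i t x * div u t x.
Definition eqS_lhs : sfield R := fun t x => matder u Sf t x.

Definition sys2_at (t : R) (x : 'rV[R]_3) : Prop :=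
  [/\ eqP_lhs t x = 0, (forall i, equ_lhs i t x = 0),
      (forall i, eqH_lhs i t x = 0) & eqS_lhs t x = 0].

Definition Ucomp (k : 'I_8) : sfield R :=
  if (k == 0 :> nat) then Pf
  else if (k <= 3)%N then u (inord (k - 1))
  else if (k <= 6)%N then H (inord (k - 4))
  else Sf.
Definition Ecomp (k : 'I_8) : sfield R :=
  if (k == 0 :> nat) then eqP_lhs
  else if (k <= 3)%N then equ_lhs (inord (k - 1))
  else if (k <= 6)%N then eqH_lhs (inord (k - 4))
  else eqS_lhs.

Definition Uvec (t : R) (x : 'rV[R]_3) : 'cV[R]_8 := \col_k Ucomp k t x.
Definition dtU (t : R) (x : 'rV[R]_3) : 'cV[R]_8 := \col_k dt (Ucomp k) t x.
Definition dxU (j : 'I_3) (t : R) (x : 'rV[R]_3) : 'cV[R]_8 :=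
  \col_k dx j (Ucomp k) t x.
Definition Evec (t : R) (x : 'rV[R]_3) : 'cV[R]_8 := \col_k Ecomp k t x.

Definition A0 (t : R) (x : 'rV[R]_3) : 'M[R]_8 :=
  diag_mx (\row_(k < 8) (if (k == 0 :> nat) then 1 / (Rf t x * PRf t x)
                         else if (k <= 3)%N then Rf t x else 1)).
End Fields.

From Pilot Require Import Defs.
From HB Require Import structures.
From mathcomp Require Import all_boot all_order all_algebra.
From mathcomp Require Import all_classical all_reals all_analysis.
From mathcomp Require Import ring.
Import Order.TTheory GRing.Theory Num.Theory.
Import numFieldNormedType.Exports.
Local Open Scope ring_scope.
Set Implicit Arguments. Unset Strict Implicit. Unset Printing Implicit Defensive.

(* Write D for the material derivative d/dt.  The continuity equations for n and rho
   state that the residuals D n + n div u and D rho + rho div u vanish.  By the chain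
   rule D P = alpha rho^(alpha-1) D rho + gamma A n^(gamma-1) D n and
   D S = (n D rho - rho D n) / n^2, so the left-hand sides of the pressure and entropy
   equations are the images of these two residuals under a 2x2 matrix whose
   determinant is a positive multiple of R P_R = alpha rho^alpha + gamma A n^gamma > 0;
   hence the two pairs of equations are equivalent.  When div H = 0, the conservative
   momentum and induction equations differ from the other forms only by multiples of
   the residuals and of div H.  As alpha, gamma >= 1, rho^alpha is differentiable
   even where rho >= 0 vanishes, because rho is minimal there.  The matrices A_j(U)
   only involve R and R P_R, and R is a function of U since P(R, S) is strictly
   increasing in R. *)

Section OneVariable.
Variable R : realType.
Implicit Types (f : R -> R) (c p : R).

Lemma derive1_local_min f c :
  derivable f c 1 -> (\forall y \near c, f c <= f y) -> 'D_1 f c = 0.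
Proof.
move=> /cvgP dfc /nbhs0P fmin.
have {}fmin : \forall h \near 0, 0 <= f (h *: 1 + c) - f c.
  by apply: filterS fmin => h; rewrite subr_ge0 [h *: 1]mulr1 addrC.
apply/eqP; rewrite eq_le; apply/andP; split.
  apply: (cvgr_to_le (cvg_dnbhs_at_left dfc)); near=> h; apply: mulr_le0_ge0.
    by rewrite invr_le0 ltW //; near: h; exact: nbhs_left_lt.
  by near: h; apply: filterS fmin => y fy _.
apply: (cvgr_to_ge (cvg_dnbhs_at_right dfc)); near=> h; apply: mulr_ge0.
  by rewrite invr_ge0 ltW //; near: h; exact: nbhs_right_gt.
by near: h; apply: filterS fmin => y fy _.
Unshelve. all: by end_near. Qed.

Lemma is_derive1_powR_nonneg f c p df : 1 <= p -> is_derive c 1 f df ->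
  (\forall y \near c, 0 <= f y) ->
  is_derive c 1 (fun y => f y `^ p) (p * f c `^ (p - 1) * df).
Proof.
move=> p_ge1 [{}df <-] f_ge0.
have p_neq0 : p != 0 by rewrite gt_eqF // (lt_le_trans ltr01 p_ge1).
have [fc0|fc_neq0] := eqVneq (f c) 0; last first.
  have fc_gt0 : 0 < f c by rewrite lt_def fc_neq0 (nbhs_singleton f_ge0).
  exact: is_derive1_comp (is_derive1_powR p fc_gt0) (derivableP df).
(* [f] has a minimum at [c], so [f'(c) = 0]; near [c], [0 <= f ^ p <= f] since [f <= 1],
   hence the difference quotient of [f ^ p] is dominated by that of [f]. *)
have Df0 : 'D_1 f c = 0 by apply: derive1_local_min; rewrite // fc0.
have qf := cvgP _ df; rewrite [lim _]Df0 in qf.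
rewrite Df0 mulr0.
have f01 : \forall h \near 0^'%classic, 0 <= f (h *: 1 + c) <= 1.
  have /derivable1_diffP/differentiable_continuous fcont := df.
  have f_le1 : \forall y \near c, f y <= 1 by apply: (cvgr_le _ fcont); rewrite fc0.
  have f01 : \forall y \near c, 0 <= f y <= 1 by near=> y; apply/andP; split; near: y.
  apply: nbhs_dnbhs; move/nbhs0P: f01; apply: filterS => h.
  by rewrite [h *: 1]mulr1 addrC.
suff qfp : (h^-1 *: (((fun y => f y `^ p) \o shift c) (h *: 1) - f c `^ p)
            @[h --> 0^'] --> 0)%classic.
  by apply: DeriveDef; [apply/cvg_ex; exists 0 | exact: cvg_lim].
rewrite fc0 powR0 //; rewrite fc0 in qf.
apply/cvgr0Pnorm_lt => e e_gt0; move/cvgr0Pnorm_lt : qf => /(_ e e_gt0) qf.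
near=> h; have /andP[fh_ge0 fh_le1] : 0 <= f (h *: 1 + c) <= 1 by near: h.
apply: le_lt_trans (near qf h _) => //=; rewrite oppr0 !addr0 !normrZ ler_wpM2l //.
rewrite !ger0_norm ?powR_ge0 //.
have [->|fh_neq0] := eqVneq (f (h *: 1 + c)) 0; first by rewrite powR0.
by rewrite ge1r_powR // lt_def fh_neq0 fh_ge0.
Unshelve. all: by end_near. Qed.

End OneVariable.

Section FieldCalculus.
Variable R : realType.
Implicit Types (f g : sfield R) (t : R) (x : 'rV[R]_3) (d : option 'I_3).

Lemma derive_line {V : normedModType R} (F : V -> R) (a v : V) :
  'D_v F a = 'D_1 (fun h : R => F (h *: v + a)) 0.
Proof.
rewrite /derive; set q1 := fun h => h^-1 *: _; set q2 := fun h => h^-1 *: _.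
suff -> : q1 = q2 by [].
by apply/funext => h; rewrite /q1 /q2 /= scale0r add0r addr0 [_%:A]mulr1.
Qed.

(* A direction of time-space is [None] (time) or [Some j] (the coordinate x_j).
   Going through [shift_pt] makes [along] commute definitionally with the pointwise
   operations on fields. *)
Definition shift_pt d t x (h : R) : R * 'rV[R]_3 :=
  if d is Some j then (t, h *: delta_mx 0 j + x) else (h + t, x).

Definition along d f t x (h : R) : R := f (shift_pt d t x h).1 (shift_pt d t x h).2.

Definition pderiv d f t x : R := if d is Some j then dx j f t x else dt f t x.

Definition is_pderiv d f t x (df : R) : Prop := is_derive (0 : R) 1 (along d f t x) df.

Definition pderivable d f t x : Prop := derivable (along d f t x) 0 1.

Definition nonneg_near d f t x : Prop := \forall h \near 0, 0 <= along d f t x h.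

Lemma dtE f t x : dt f t x = pderiv None f t x. Proof. by []. Qed.

Lemma dxE j f t x : dx j f t x = pderiv (Some j) f t x. Proof. by []. Qed.

Lemma along0 d f t x : along d f t x 0 = f t x.
Proof. by case: d => [j|]; rewrite /along /= ?scale0r add0r. Qed.

Lemma pderivE d f t x : pderiv d f t x = 'D_1 (along d f t x) 0.
Proof.
case: d => [j|] /=; first by rewrite /dx (derive_line (f t)).
rewrite /dt derive1E (derive_line (fun s => f s x)).
suff -> : (fun h : R => f (h *: 1 + t) x) = along None f t x by [].
by apply/funext => h; rewrite [h *: 1]mulr1.
Qed.

Lemma is_pderivP d f t x : pderivable d f t x -> is_pderiv d f t x (pderiv d f t x).
Proof. by move=> df; rewrite pderivE; apply: derivableP. Qed.

Lemma pderiv_val d f t x df : is_pderiv d f t x df -> pderiv d f t x = df.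
Proof. by rewrite pderivE => -[_]. Qed.

Lemma is_pderivD d f g t x df dg : is_pderiv d f t x df -> is_pderiv d g t x dg ->
  is_pderiv d (fun t x => f t x + g t x) t x (df + dg).
Proof. exact: is_deriveD. Qed.

Lemma is_pderivB d f g t x df dg : is_pderiv d f t x df -> is_pderiv d g t x dg ->
  is_pderiv d (fun t x => f t x - g t x) t x (df - dg).
Proof. exact: is_deriveB. Qed.

Lemma is_pderivM d f g t x df dg : is_pderiv d f t x df -> is_pderiv d g t x dg ->
  is_pderiv d (fun t x => f t x * g t x) t x (f t x * dg + g t x * df).
Proof. by rewrite -(along0 d f) -(along0 d g); exact: is_deriveM. Qed.

Lemma is_pderivMl d (k : R) f t x df : is_pderiv d f t x df ->
  is_pderiv d (fun t x => k * f t x) t x (k * df).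
Proof. exact: is_deriveZ. Qed.

Lemma is_pderivV d f t x df : f t x != 0 -> is_pderiv d f t x df ->
  is_pderiv d (fun t x => (f t x)^-1) t x (- (f t x) ^- 2 * df).
Proof. by rewrite -(along0 d f); exact: is_deriveV. Qed.

Lemma is_pderiv_sum d (F : 'I_3 -> sfield R) t x (dF : 'I_3 -> R) :
  (forall i, is_pderiv d (F i) t x (dF i)) ->
  is_pderiv d (fun t x => \sum_(i < 3) F i t x) t x (\sum_(i < 3) dF i).
Proof.
move=> dFi; have := is_derive_sum dFi; congr is_derive.
by apply/funext => h; rewrite /along fct_sumE.
Qed.

Lemma is_pderiv_powR d f t x df p : 1 <= p -> is_pderiv d f t x df ->
  nonneg_near d f t x ->
  is_pderiv d (fun t x => f t x `^ p) t x (p * f t x `^ (p - 1) * df).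
Proof. by rewrite -(along0 d f); exact: is_derive1_powR_nonneg. Qed.

Lemma pderivM d f g t x : pderivable d f t x -> pderivable d g t x ->
  pderiv d (fun t x => f t x * g t x) t x = f t x * pderiv d g t x + g t x * pderiv d f t x.
Proof. by move=> /is_pderivP df /is_pderivP dg; apply: pderiv_val; apply: is_pderivM. Qed.

Lemma pderivable_C1on T f t x d : C1on T f -> inslab T t -> pderivable d f t x.
Proof.
move=> /(_ t x) + tT => /(_ tT) [f_dt [f_dx _]].
case: d => [j|]; first by have /derivable1P := f_dx j.
move/derivable1P: f_dt; rewrite /pderivable.
suff -> : (fun h : R => f (h *: 1 + t) x) = along None f t x by [].
by apply/funext => h; rewrite [h *: 1]mulr1.
Qed.

Lemma nonneg_near_slab T f t x d : (forall t x, inslab T t -> 0 <= f t x) ->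
  inslab T t -> nonneg_near d f t x.
Proof.
move=> f_ge0 tT; case: d => [j|]; first by near=> h; apply: f_ge0.
have /nbhs0P : \forall s \near t, inslab T s by apply: near_in_itvoo; rewrite in_itv.
by apply: filterS => h; rewrite addrC; apply: f_ge0.
Unshelve. all: by end_near. Qed.

End FieldCalculus.

Lemma ordS3 (i : 'I_3) : ordS (ordS (ordS i)) = i.
Proof. by apply: val_inj; case: i => [[|[|[|]]] ?]. Qed.

Lemma sum3_rot (R : nmodType) (F : 'I_3 -> R) i :
  \sum_(l < 3) F l = F i + F (ordS i) + F (ordS (ordS i)).
Proof.
have E (a b : 'I_3) : val a = val b -> F a = F b by move=> /val_inj ->.
rewrite !big_ord_recr !big_ord0 /= add0r.
case: i => [[|[|[|//]]] ?]; [|rewrite -addrA addrC|rewrite addrC addrA];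
  by congr (_ + _ + _); apply: E.
Qed.

Lemma sum3_inord (R : nmodType) (F : 'I_3 -> R) :
  \sum_(i < 3) F i = F (inord 0) + F (inord 1) + F (inord 2).
Proof.
rewrite (sum3_rot _ (inord 0)); congr (_ + F _ + F _).
all: by apply: val_inj => /=; rewrite !inordK.
Qed.

Lemma mulmx_col8 (R : pzSemiRingType) (M : 'M[R]_8) (v : 'cV[R]_8) k : (M *m v) k 0 =
  M k (inord 0) * v (inord 0) 0 + M k (inord 1) * v (inord 1) 0
  + M k (inord 2) * v (inord 2) 0 + M k (inord 3) * v (inord 3) 0
  + M k (inord 4) * v (inord 4) 0 + M k (inord 5) * v (inord 5) 0
  + M k (inord 6) * v (inord 6) 0 + M k (inord 7) * v (inord 7) 0.
Proof.
rewrite mxE !big_ord_recr !big_ord0 /= add0r.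
by congr (_ + _ + _ + _ + _ + _ + _ + _); congr (M _ _ * v _ _); apply: val_inj; rewrite /= inordK.
Qed.

Lemma lin2_eq0 (F : fieldType) (a b c d X Y : F) : a * d - b * c != 0 ->
  a * X + b * Y = 0 -> c * X + d * Y = 0 -> X = 0 /\ Y = 0.
Proof.
move=> det_neq0 e1 e2.
have dX : (a * d - b * c) * X = d * (a * X + b * Y) - b * (c * X + d * Y) by ring.
have dY : (a * d - b * c) * Y = a * (c * X + d * Y) - c * (a * X + b * Y) by ring.
rewrite e1 e2 !mulr0 subr0 in dX dY.
by move/eqP: dX; move/eqP: dY; rewrite !mulf_eq0 (negbTE det_neq0) /= => /eqP -> /eqP ->.
Qed.

Lemma diag_mx_quad_gt0 (R : realDomainType) m (dg : 'rV[R]_m) (v : 'cV[R]_m) :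
  (forall k, 0 < dg 0 k) -> v != 0 -> 0 < (v^T *m diag_mx dg *m v) 0 0.
Proof.
move=> dg_gt0 v_neq0.
have [i vi_neq0] : exists i, v i 0 != 0.
  apply/existsP; apply: contraNT v_neq0; rewrite negb_exists => /forallP v0.
  by apply/eqP/matrixP => a b; rewrite (ord1 b) !mxE; apply/eqP/negPn/v0.
rewrite mxE (bigD1 i) //= mul_mx_diag !mxE ltr_pwDl //.
  by rewrite mulrAC -expr2 mulr_gt0 // lt_def sqrf_eq0 vi_neq0 sqr_ge0.
by apply: sumr_ge0 => j _; rewrite !mxE mulrAC -expr2 mulr_ge0 ?sqr_ge0 // ltW.
Qed.

(* [ring] and [field] are much faster once the values at [(t, x)] are opaque variables. *)
Ltac freeze_at t x := repeat match goal with
  | |- context [?f t x] => generalize (f t x); intro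
  end.

Unset Implicit Arguments.

Section TwoFluid.
Variables (R : realType) (alpha gamma A : R).
Hypotheses (alpha_ge1 : 1 <= alpha) (gamma_ge1 : 1 <= gamma) (A_gt0 : 0 < A).

Let alpha_gt0 : 0 < alpha. Proof. exact: lt_le_trans ltr01 alpha_ge1. Qed.
Let gamma_gt0 : 0 < gamma. Proof. exact: lt_le_trans ltr01 gamma_ge1. Qed.

Lemma ltr_Pfun s r1 r2 : 0 <= s -> 0 < r1 -> r1 < r2 ->
  Defs.Pfun alpha gamma A r1 s < Defs.Pfun alpha gamma A r2 s.
Proof.
move=> s_ge0 r1_gt0 r12; have r2_gt0 := lt_trans r1_gt0 r12.
have e_gt0 : 0 < (s + 1)^-1 by rewrite invr_gt0 ltr_wpDl.
have c_ge0 : 0 <= s / (s + 1) := mulr_ge0 s_ge0 (ltW e_gt0).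
rewrite /Defs.Pfun -!mulrA; apply: ler_ltD.
  apply: (ge0_ler_powR (ltW alpha_gt0)); rewrite ?nnegrE.
  - exact: mulr_ge0 (ltW r1_gt0) c_ge0.
  - exact: mulr_ge0 (ltW r2_gt0) c_ge0.
  - by apply: ler_wpM2r => //; exact: ltW.
rewrite ltr_pM2l //; apply: (gt0_ltr_powR gamma_gt0); rewrite ?nnegrE.
- exact: mulr_ge0 (ltW r1_gt0) (ltW e_gt0).
- exact: mulr_ge0 (ltW r2_gt0) (ltW e_gt0).
- by rewrite ltr_pM2r.
Qed.

Lemma Pfun_inj s r1 r2 : 0 <= s -> 0 < r1 -> 0 < r2 ->
  Defs.Pfun alpha gamma A r1 s = Defs.Pfun alpha gamma A r2 s -> r1 = r2.
Proof.
move=> s_ge0 r1_gt0 r2_gt0 eP; case: (ltgtP r1 r2) => // r12.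
  by have := ltr_Pfun _ _ _ s_ge0 r1_gt0 r12; rewrite eP ltxx.
by have := ltr_Pfun _ _ _ s_ge0 r2_gt0 r12; rewrite eP ltxx.
Qed.

Definition Ucoord (U : 'cV[R]_8) (k : nat) : R := U (inord k) 0.

(* The total density, recovered from U = (P, u, H, S) by solving P = P(R, S)
   (an arbitrary value when there is no positive solution). *)
Definition R_of (U : 'cV[R]_8) : R :=
  get (fun r : R => 0 < r /\ Defs.Pfun alpha gamma A r (Ucoord U 7) = Ucoord U 0).

Definition RPR_of (U : 'cV[R]_8) : R :=
  R_of U * PRfun alpha gamma A (R_of U) (Ucoord U 7).

(* Upper triangle (p <= q) of A_j(U) in the block order (P, u, H, S):
   A_j(P, P) = u_j / (R P_R), A_j(P, u_j) = 1, A_j(u_i, u_i) = R u_j,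
   A_j(u_i, H_k) = - [i = k] H_j + [i = j] H_k, A_j(H_i, H_i) = A_j(S, S) = u_j. *)
Definition Aj_upper (j : 'I_3) (U : 'cV[R]_8) (p q : nat) : R :=
  let uj := Ucoord U j.+1 in
  if (p == 0)%N && (q == 0)%N then uj / RPR_of U
  else if (p == 0)%N && (q == j.+1)%N then 1
  else if (1 <= p <= 3)%N && (q == p)%N then R_of U * uj
  else if (1 <= p <= 3)%N && (4 <= q <= 6)%N then
     (if (p.-1 == q - 4)%N then - Ucoord U j.+4 else 0)
     + (if (p.-1 == j)%N then Ucoord U q else 0)
  else if (4 <= p)%N && (q == p)%N then uj
  else 0.

Definition Aj (j : 'I_3) (U : 'cV[R]_8) : 'M[R]_8 :=
  \matrix_(a, b) if (a <= b)%N then Aj_upper j U a b else Aj_upper j U b a.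

Lemma Aj_sym j U : (Aj j U)^T = Aj j U.
Proof.
apply/matrixP => a b; rewrite !mxE.
by case: (ltngtP a b) => [ab|ab|->]; rewrite ?(ltnW ab) ?leqNgt ?ab.
Qed.

Section AtPoint.
Variables (n rho : sfield R) (u H : vfield R) (t : R) (x : 'rV[R]_3).
Hypotheses (n_gt0 : 0 < n t x) (rho_ge0 : 0 <= rho t x).

Let n_neq0 : n t x != 0. Proof. by rewrite gt_eqF. Qed.

Lemma Rf_gt0 : 0 < Rf n rho t x.
Proof. by rewrite /Rf ltr_wpDl. Qed.

Lemma Sf_add1 : Sf n rho t x + 1 = Rf n rho t x / n t x.
Proof. by rewrite /Sf /Rf; field. Qed.

Lemma Rf_Sf_rho : Rf n rho t x * Sf n rho t x / (Sf n rho t x + 1) = rho t x.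
Proof. by rewrite Sf_add1 /Sf; field; rewrite n_neq0 (lt0r_neq0 Rf_gt0). Qed.

Lemma Rf_Sf_n : Rf n rho t x / (Sf n rho t x + 1) = n t x.
Proof. by rewrite Sf_add1; field; rewrite n_neq0 (lt0r_neq0 Rf_gt0). Qed.

Lemma Pfun_Rf_Sf :
  Defs.Pfun alpha gamma A (Rf n rho t x) (Sf n rho t x) = Pf alpha gamma A n rho t x.
Proof. by rewrite /Defs.Pfun Rf_Sf_rho Rf_Sf_n. Qed.

Lemma Rf_PRf : Rf n rho t x * PRf alpha gamma A n rho t x =
  alpha * rho t x `^ alpha + gamma * A * n t x `^ gamma.
Proof. by rewrite /PRf /PRfun Rf_Sf_rho Rf_Sf_n; field; exact: lt0r_neq0 Rf_gt0. Qed.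

Lemma Rf_PRf_gt0 : 0 < Rf n rho t x * PRf alpha gamma A n rho t x.
Proof.
by rewrite Rf_PRf ltr_wpDl ?mulr_ge0 ?mulr_gt0 ?powR_ge0 ?powR_gt0 // ltW.
Qed.

Lemma Ucoord_Uvec k :
  Ucoord (Uvec alpha gamma A n rho u H t x) k = Ucomp alpha gamma A n rho u H (inord k) t x.
Proof. by rewrite /Ucoord mxE. Qed.

Lemma R_of_Uvec : R_of (Uvec alpha gamma A n rho u H t x) = Rf n rho t x.
Proof.
have S_ge0 : 0 <= Sf n rho t x := divr_ge0 rho_ge0 (ltW n_gt0).
rewrite /R_of !Ucoord_Uvec /Ucomp !inordK //=.
set P := fun r => _; have [r_gt0 Pr] : P (get P).
  exact: getPex (ex_intro _ _ (conj Rf_gt0 Pfun_Rf_Sf)).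
by apply: (Pfun_inj _ _ _ S_ge0 r_gt0 Rf_gt0); rewrite Pr Pfun_Rf_Sf.
Qed.

Lemma A0_posdef (v : 'cV[R]_8) : v != 0 -> 0 < (v^T *m A0 alpha gamma A n rho t x *m v) 0 0.
Proof.
apply: diag_mx_quad_gt0 => k; rewrite mxE.
by case: ifP => _; [rewrite div1r invr_gt0 Rf_PRf_gt0 | case: ifP => _; rewrite ?Rf_gt0].
Qed.

Section Smooth.
Hypotheses (n_d : forall d, pderivable d n t x) (rho_d : forall d, pderivable d rho t x).
Hypotheses (u_d : forall i d, pderivable d (u i) t x).
Hypotheses (H_d : forall i d, pderivable d (H i) t x).
Hypotheses (n_nn : forall d, nonneg_near d n t x).
Hypotheses (rho_nn : forall d, nonneg_near d rho t x).

Lemma pderiv_Ru d i : pderiv d (fun t x => Rf n rho t x * u i t x) t x =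
  Rf n rho t x * pderiv d (u i) t x + u i t x * (pderiv d rho t x + pderiv d n t x).
Proof. by apply: pderiv_val; apply: is_pderivM (is_pderivD _ _) _; apply: is_pderivP. Qed.

Lemma pderiv_momentum_flux d i j :
  pderiv d (fun t x => Rf n rho t x * u i t x * u j t x - H i t x * H j t x) t x =
  Rf n rho t x * u i t x * pderiv d (u j) t x
  + u j t x * (Rf n rho t x * pderiv d (u i) t x
               + u i t x * (pderiv d rho t x + pderiv d n t x))
  - (H i t x * pderiv d (H j) t x + H j t x * pderiv d (H i) t x).
Proof.
apply: pderiv_val; apply: is_pderivB (is_pderivM (is_pderivM (is_pderivD _ _) _) _)
  (is_pderivM _ _); exact: is_pderivP.
Qed.

Lemma pderiv_cross d a b c e :
  pderiv d (fun t x => u a t x * H b t x - u c t x * H e t x) t x =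
  u a t x * pderiv d (H b) t x + H b t x * pderiv d (u a) t x
  - (u c t x * pderiv d (H e) t x + H e t x * pderiv d (u c) t x).
Proof.
by apply: pderiv_val; apply: is_pderivB (is_pderivM _ _) (is_pderivM _ _); apply: is_pderivP.
Qed.

Lemma is_pderiv_Pf d : is_pderiv d (Pf alpha gamma A n rho) t x
  (alpha * rho t x `^ (alpha - 1) * pderiv d rho t x
   + A * (gamma * n t x `^ (gamma - 1) * pderiv d n t x)).
Proof.
apply: is_pderivD (is_pderivMl _ _); apply: is_pderiv_powR => //; exact: is_pderivP.
Qed.

Lemma pderiv_Pf d : pderiv d (Pf alpha gamma A n rho) t x =
  alpha * rho t x `^ (alpha - 1) * pderiv d rho t x
  + A * (gamma * n t x `^ (gamma - 1) * pderiv d n t x).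
Proof. exact: pderiv_val (is_pderiv_Pf d). Qed.

Lemma pderiv_qf d : pderiv d (qf alpha gamma A n rho H) t x =
  pderiv d (Pf alpha gamma A n rho) t x + \sum_(k < 3) H k t x * pderiv d (H k) t x.
Proof.
have dH2 k : is_pderiv d (fun t x => H k t x ^+ 2) t x
    (H k t x * pderiv d (H k) t x + H k t x * pderiv d (H k) t x).
  by apply: is_pderivM; apply: is_pderivP.
rewrite pderiv_Pf (pderiv_val (is_pderivD (is_pderiv_Pf d) (is_pderivMl _ (is_pderiv_sum dH2)))).
by congr (_ + _); rewrite mulr_sumr; apply: eq_bigr => k _; field.
Qed.

Lemma pderiv_Sf d : pderiv d (Sf n rho) t x =
  (n t x * pderiv d rho t x - rho t x * pderiv d n t x) / n t x ^+ 2.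
Proof.
have := is_pderivM (is_pderivP (rho_d d)) (is_pderivV n_neq0 (is_pderivP (n_d d))).
by move/pderiv_val ->; field.
Qed.

Lemma matder_Pf : matder u (Pf alpha gamma A n rho) t x =
  alpha * rho t x `^ (alpha - 1) * matder u rho t x
  + gamma * A * n t x `^ (gamma - 1) * matder u n t x.
Proof.
rewrite /matder !big_ord_recr !big_ord0 /= !add0r !dxE !dtE !pderiv_Pf.
by freeze_at t x; ring.
Qed.

Lemma matder_Sf : matder u (Sf n rho) t x =
  (n t x * matder u rho t x - rho t x * matder u n t x) / n t x ^+ 2.
Proof.
rewrite /matder !big_ord_recr !big_ord0 /= !add0r !dxE !dtE !pderiv_Sf.
by move: n_neq0; freeze_at t x; move=> n_neq0'; field.
Qed.

Lemma conservative_continuityE f : (forall d, pderivable d f t x) ->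
  dt f t x + div (fun j t x => f t x * u j t x) t x =
  matder u f t x + f t x * div u t x.
Proof.
move=> f_d; rewrite /div /matder !big_ord_recr !big_ord0 /= !add0r !dxE.
by rewrite !(pderivM (f_d _) (u_d _ _)); freeze_at t x; ring.
Qed.

Lemma conservative_momentumE i :
  dt (fun t x => Rf n rho t x * u i t x) t x
  + \sum_(j < 3) dx j (fun t x => Rf n rho t x * u i t x * u j t x - H i t x * H j t x) t x
  + dx i (qf alpha gamma A n rho H) t x =
  equ_lhs alpha gamma A n rho u H i t x
  + u i t x * (matder u n t x + n t x * div u t x + (matder u rho t x + rho t x * div u t x))
  - H i t x * div H t x.
Proof.
rewrite /equ_lhs /matder /div !(sum3_rot _ i) !dxE !dtE.
rewrite !pderiv_momentum_flux pderiv_Ru pderiv_qf (sum3_rot _ i) /Rf.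
by freeze_at t x; ring.
Qed.

Lemma conservative_inductionE i : dt (H i) t x - curl (crossf u H) i t x =
  eqH_lhs u H i t x - u i t x * div H t x.
Proof.
rewrite /curl /crossf !ordS3 /eqH_lhs /matder /div !(sum3_rot _ i) !dxE !pderiv_cross.
by freeze_at t x; ring.
Qed.

Lemma eqP_lhsE : eqP_lhs alpha gamma A n rho u t x =
  (alpha * rho t x `^ (alpha - 1) * (matder u rho t x + rho t x * div u t x)
   + gamma * A * n t x `^ (gamma - 1) * (matder u n t x + n t x * div u t x))
  / (alpha * rho t x `^ alpha + gamma * A * n t x `^ gamma).
Proof.
have K_neq0 := lt0r_neq0 Rf_PRf_gt0.
rewrite /eqP_lhs matder_Pf Rf_PRf in K_neq0 *.
rewrite -(mulr_powRB1 rho_ge0 alpha_gt0) -(mulr_powRB1 (ltW n_gt0) gamma_gt0) in K_neq0 *.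
by move: K_neq0; freeze_at t x; move=> K_neq0; field.
Qed.

Lemma eqS_lhsE : eqS_lhs n rho u t x =
  (n t x * (matder u rho t x + rho t x * div u t x)
   - rho t x * (matder u n t x + n t x * div u t x)) / n t x ^+ 2.
Proof. by rewrite /eqS_lhs matder_Sf; congr (_ / _); ring. Qed.

Lemma eqP_eqS_eq0 :
  eqP_lhs alpha gamma A n rho u t x = 0 /\ eqS_lhs n rho u t x = 0 <->
  matder u n t x + n t x * div u t x = 0 /\ matder u rho t x + rho t x * div u t x = 0.
Proof.
rewrite eqP_lhsE eqS_lhsE.
set Xn := matder u n t x + _; set Xr := matder u rho t x + _.
split=> [[]|[-> ->]]; last by rewrite !mulr0 subrr addr0 !mul0r.
have K_gt0 := Rf_PRf_gt0; rewrite Rf_PRf in K_gt0.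
move=> /eqP; rewrite mulf_eq0 invr_eq0 (gt_eqF K_gt0) orbF => /eqP eP.
move=> /eqP; rewrite mulf_eq0 invr_eq0 expf_eq0 (negbTE n_neq0) andbF orbF => /eqP eS.
apply: (@lin2_eq0 _ (gamma * A * n t x `^ (gamma - 1)) (alpha * rho t x `^ (alpha - 1))
  (- rho t x) (n t x)).
- rewrite mulrN opprK -[X in X + _]mulrA -[X in _ + X]mulrA.
  rewrite (mulrC (n t x `^ _)) (mulrC (rho t x `^ _)) !mulr_powRB1 ?(ltW n_gt0) //.
  by rewrite addrC gt_eqF.
- by rewrite addrC.
- by rewrite addrC mulNr.
Qed.

Lemma sys_equiv_at : div H t x = 0 ->
  sys1_at alpha gamma A n rho u H t x <-> sys2_at alpha gamma A n rho u H t x.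
Proof.
move=> divH0; rewrite /sys1_at /sys2_at.
rewrite (conservative_continuityE n n_d) (conservative_continuityE rho rho_d).
split=> [[Xn Xr mom ind] | [eP eu eH eS]].
  have [eP eS] := eqP_eqS_eq0.2 (conj Xn Xr).
  split=> // i.
    by have := mom i; rewrite conservative_momentumE Xn Xr divH0 addr0 !mulr0 subr0 addr0.
  by have := ind i; rewrite conservative_inductionE divH0 mulr0 subr0.
have [Xn Xr] := eqP_eqS_eq0.1 (conj eP eS).
split=> // i; first by rewrite conservative_momentumE Xn Xr divH0 eu addr0 !mulr0 subr0 addr0.
by rewrite conservative_inductionE divH0 eH mulr0 subr0.
Qed.

Lemma Evec_symmetric_form : Evec alpha gamma A n rho u H t x =
  A0 alpha gamma A n rho t x *m dtU alpha gamma A n rho u H t x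
  + \sum_(j < 3) Aj j (Uvec alpha gamma A n rho u H t x) *m dxU alpha gamma A n rho u H j t x.
Proof.
have dxUE j b : dxU alpha gamma A n rho u H j t x b 0 =
    dx j (Ucomp alpha gamma A n rho u H b) t x by rewrite mxE.
have AjE j U (a b : 'I_8) :
    Aj j U a b = if (a <= b)%N then Aj_upper j U a b else Aj_upper j U b a by rewrite mxE.
(* With [U], the [A_j] and the derivative vectors abstracted, the unifier no longer
   unfolds them when the eight rows are expanded. *)
move: R_of_Uvec Ucoord_Uvec dxUE AjE.
set W := dxU alpha gamma A n rho u H; set U := Uvec alpha gamma A n rho u H t x; set M := Aj.
clearbody W U M => RU UE WE ME.
apply/matrixP => k c; rewrite ord1 {c} /A0 mul_diag_mx !mxE summxE sum3_inord !mulmx_col8.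
rewrite -(inord_val k); case: k => m hm /=; case: m hm => [|[|[|[|[|[|[|[|//]]]]]]]] hm.
all: rewrite !ME !WE !inordK //= /Aj_upper /RPR_of RU !UE /Ucomp /Ecomp.
all: rewrite !inordK //= ?subSS ?subn0 -/(PRf alpha gamma A n rho t x).
all: rewrite /eqP_lhs /equ_lhs /eqH_lhs /eqS_lhs /matder /div !sum3_inord !dxE !dtE.
all: rewrite ?pderiv_qf ?sum3_inord.
all: by freeze_at t x; ring.
Qed.

End Smooth.
End AtPoint.

Section Slab.
Variables (T : R) (n rho : sfield R) (u H : vfield R).
Hypotheses (Cn : C1on T n) (Crho : C1on T rho).
Hypotheses (Cu : forall i, C1on T (u i)) (CH : forall i, C1on T (H i)).
Hypotheses (n_gt0 : forall t x, inslab T t -> 0 < n t x).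
Hypotheses (rho_ge0 : forall t x, inslab T t -> 0 <= rho t x).

Section SlabPoint.
Variables (t : R) (x : 'rV[R]_3).
Hypothesis tT : inslab T t.

Let n_gt0_at := n_gt0 t x tT.
Let rho_ge0_at := rho_ge0 t x tT.
Let n_d d : pderivable d n t x := pderivable_C1on Cn tT.
Let rho_d d : pderivable d rho t x := pderivable_C1on Crho tT.
Let u_d i d : pderivable d (u i) t x := pderivable_C1on (Cu i) tT.
Let H_d i d : pderivable d (H i) t x := pderivable_C1on (CH i) tT.
Let n_nn d : nonneg_near d n t x :=
  nonneg_near_slab x d (fun s y sT => ltW (n_gt0 s y sT)) tT.
Let rho_nn d : nonneg_near d rho t x := nonneg_near_slab x d rho_ge0 tT.

Lemma sys_equiv_slab_at : div H t x = 0 ->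
  sys1_at alpha gamma A n rho u H t x <-> sys2_at alpha gamma A n rho u H t x.
Proof. exact: sys_equiv_at. Qed.

Lemma Evec_symmetric_slab : Evec alpha gamma A n rho u H t x =
  A0 alpha gamma A n rho t x *m dtU alpha gamma A n rho u H t x
  + \sum_(j < 3) Aj j (Uvec alpha gamma A n rho u H t x) *m dxU alpha gamma A n rho u H j t x.
Proof. exact: Evec_symmetric_form. Qed.

Lemma A0_posdef_slab (v : 'cV[R]_8) : v != 0 -> 0 < (v^T *m A0 alpha gamma A n rho t x *m v) 0 0.
Proof. exact: A0_posdef. Qed.

End SlabPoint.

Lemma sys_equiv_slab : (forall t x, inslab T t -> div H t x = 0) ->
  (forall t x, inslab T t -> sys1_at alpha gamma A n rho u H t x) <->
  (forall t x, inslab T t -> sys2_at alpha gamma A n rho u H t x).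
Proof.
by move=> divH0; split=> sys t x tT; apply/(sys_equiv_slab_at t x tT (divH0 t x tT)); apply: sys.
Qed.

End Slab.
End TwoFluid.

Theorem mainTheorem1 (R : realType) (alpha gamma A : R) :
  1 <= alpha -> 1 <= gamma -> 0 < A ->
  exists Aj : 'I_3 -> 'cV[R]_8 -> 'M[R]_8,
    (forall (j : 'I_3) (U : 'cV[R]_8), (Aj j U)^T = Aj j U) /\
    forall (T : R) (n rho : sfield R) (u H : vfield R),
      C1on T n -> C1on T rho ->
      (forall i, C1on T (u i)) -> (forall i, C1on T (H i)) ->
      (forall t x, inslab T t -> 0 < n t x) ->
      (forall t x, inslab T t -> 0 <= rho t x) ->
      (forall t x, inslab T t -> div H t x = 0) ->
      ((forall t x, inslab T t -> sys1_at alpha gamma A n rho u H t x) <->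
       (forall t x, inslab T t -> sys2_at alpha gamma A n rho u H t x)) /\
      (forall t x, inslab T t ->
         Evec alpha gamma A n rho u H t x =
           A0 alpha gamma A n rho t x *m dtU alpha gamma A n rho u H t x
           + \sum_(j < 3) Aj j (Uvec alpha gamma A n rho u H t x)
                            *m dxU alpha gamma A n rho u H j t x) /\
      (forall t x, inslab T t ->
         forall v : 'cV[R]_8, v != 0 ->
           0 < (v^T *m A0 alpha gamma A n rho t x *m v) 0 0).
Proof.
move=> alpha_ge1 gamma_ge1 A_gt0; exists (Aj R alpha gamma A).
split=> [|T n rho u H Cn Crho Cu CH n_gt0 rho_ge0 divH0]; first exact: Aj_sym.
split; first exact: sys_equiv_slab.
by split=> t x tT; [apply: Evec_symmetric_slab | apply: A0_posdef_slab]; eassumption.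
Qed.
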